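(* Let $\alpha,\beta\ge0$, $m_\lambda>0$, $m\in\mathbb N$, $a\ge0$, $b\ge\frac12$, fix $t\ge0$ and a real number $W^0_t$, and set $V=m_\lambda\exp((\beta-\frac12)t+W^0_t)$, $$f(x)=V\tfrac{\alpha}{2}x+\tfrac{x^2}{2},\qquad g(x)=-\Big(\big(\tfrac{\alpha}{2}-\beta\big)V+x\Big),$$ $L\varphi=\partial_x(f\,\partial_x\varphi)+g\,\partial_x\varphi$ and $\sigma(\varphi)=\varphi-\partial_x(x\varphi)$. Then for $u\in H_1:=W_0^{m,2}(a,b)$, $$\langle Lu,u\rangle_{H_1}+\frac12\sup_{\varphi\in H_1,\|\varphi\|_{H_1}=1}|\langle u,\sigma\varphi\rangle_{H_1}|^2\le C_{\alpha,\beta,m}\,(1+V)\,\|u\|_{H_1}^2,$$ where $C_{\alpha,\beta,m}$ is a constant depending on $\alpha,\beta,m$.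
   Context: $W_0^{m,2}(a,b)$ is the closure of $C_c^\infty((0,\infty))$ under the norm $\|f\|_{H_1}=\big(\sum_{\gamma=0}^m\int_0^\infty(1+x^2)^{2a+2\gamma b}|\partial_x^\gamma f|^2dx\big)^{1/2}$, with inner product $\langle u,v\rangle_{H_1}=\sum_{\gamma=0}^m\int_0^\infty(1+x^2)^{2a+2\gamma b}\partial_x^\gamma u\,\partial_x^\gamma v\,dx$. *)

From Stdlib Require Import Reals.
From Coquelicot Require Import Coquelicot.
Open Scope R_scope.

(* phi : R -> R is (the extension by zero of) an element of C_c^infty((0,oo)):
   infinitely differentiable everywhere, and vanishing outside some [r,R]
   with 0 < r <= R. *)
Definition test_fn (phi : R -> R) : Prop :=
  (forall (n : nat) (x : R), ex_derive (Derive_n phi n) x) /\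
  exists r R0 : R, 0 < r /\ r <= R0 /\
    forall x, (x < r \/ R0 < x) -> phi x = 0.

Definition weight (a b : R) (gamma : nat) (x : R) : R :=
  Rpower (1 + x ^ 2) (2 * a + 2 * INR gamma * b).

Definition int0inf (h : R -> R) : R :=
  RInt_gen h (at_point 0) (Rbar_locally p_infty).

Definition ipH1 (m : nat) (a b : R) (u v : R -> R) : R :=
  sum_f_R0 (fun gamma =>
     int0inf (fun x => weight a b gamma x * Derive_n u gamma x * Derive_n v gamma x)) m.

Definition normH1 (m : nat) (a b : R) (u : R -> R) : R := sqrt (ipH1 m a b u u).

Definition Vcoef (beta mlam t W : R) : R := mlam * exp ((beta - 1/2) * t + W).

Definition fcoef (alpha V : R) (x : R) : R := V * (alpha / 2) * x + x ^ 2 / 2.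
Definition gcoef (alpha beta V : R) (x : R) : R := - ((alpha / 2 - beta) * V + x).

Definition Lop (alpha beta V : R) (phi : R -> R) : R -> R :=
  fun x => Derive (fun y => fcoef alpha V y * Derive phi y) x
           + gcoef alpha beta V x * Derive phi x.

Definition sigma_op (phi : R -> R) : R -> R :=
  fun x => phi x - Derive (fun y => y * phi y) x.

From Stdlib Require Import Reals Lra.
From Coquelicot Require Import Coquelicot.
Open Scope R_scope.

(* At derivative level g the weight is w = (1 + x^2)^p with p = 2a + 2gb, and
   D^g (L u) = f u^(g+2) + (beta V + g f') u^(g+1) + g (g - 1)/2 u^(g),
   D^g (sigma phi) = - (x phi^(g+1) + g phi^(g)).
   Integrating by parts moves sigma onto u as T u = x u^(g+1) + c u^(g), so Cauchy-Schwarz and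
   |phi| = 1 bound |<u, sigma phi>|^2 by sum_g int w (T u)^2.  On each level an explicit energy
   E = w (f u^(g) u^(g+1) + Q (u^(g))^2 / 2), which vanishes at 0 and beyond the support, has
   E' = w D^g(L u) u^(g) + w (T u)^2 / 2 + w (f - x^2/2) (u^(g+1))^2 - w R (u^(g))^2.
   Here f - x^2/2 = V alpha x / 2 >= 0, and R is built from the bounded quotients x^k / (1+x^2)^j
   with coefficients affine in V, so R <= C (1 + V).  Integrating E' over the support gives the
   level estimate, and summing over g <= m gives the theorem. *)

Lemma is_RInt_gen_vanishing_tail (h : R -> R) (M : R) :
  (forall x, M < x -> h x = 0) ->
  is_RInt_gen h (at_point M) (Rbar_locally p_infty) 0.
Proof.
  intros Hz.
  assert (H0 : is_RInt_gen (Derive (fun _ => 0)) (at_point M) (Rbar_locally p_infty) (0 - 0)).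
  { apply is_RInt_gen_Derive; try apply filterlim_const;
      apply Filter_prod with (fun _ => True) (fun _ => True); try easy; try (exists 0; easy).
    - intros; apply ex_derive_const.
    - intros; apply (continuous_ext (fun _ => 0));
        [intros; symmetry; apply Derive_const | apply continuous_const]. }
  rewrite Rminus_0_r in H0. revert H0. apply is_RInt_gen_ext.
  apply Filter_prod with (fun x => x = M) (fun y => M < y); [reflexivity | now exists M |].
  intros x y -> Hy t Ht; simpl in *.
  rewrite Derive_const, Hz; [reflexivity |]. rewrite Rmin_left in Ht; lra.
Qed.

Lemma int0inf_RInt (h : R -> R) (M : R) :
  0 <= M -> (forall x, continuous h x) -> (forall x, M <= x -> h x = 0) ->
  int0inf h = RInt h 0 M.
Proof.
  intros HM Hc Hz. apply is_RInt_gen_unique.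
  rewrite <- (Rplus_0_r (RInt h 0 M)).
  apply (is_RInt_gen_Chasles h M).
  - apply is_RInt_gen_at_point, (RInt_correct (V := R_CompleteNormedModule)).
    apply (ex_RInt_continuous (V := R_CompleteNormedModule)); intros; apply Hc.
  - apply is_RInt_gen_vanishing_tail; intros; apply Hz; lra.
Qed.

Lemma RInt_Rplus (f g : R -> R) (a b : R) : ex_RInt f a b -> ex_RInt g a b ->
  RInt (fun x => f x + g x) a b = RInt f a b + RInt g a b.
Proof. exact (RInt_plus f g a b). Qed.

Lemma RInt_Rminus (f g : R -> R) (a b : R) : ex_RInt f a b -> ex_RInt g a b ->
  RInt (fun x => f x - g x) a b = RInt f a b - RInt g a b.
Proof. exact (RInt_minus f g a b). Qed.

Lemma RInt_Rscal (f : R -> R) (a b k : R) : ex_RInt f a b ->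
  RInt (fun x => k * f x) a b = k * RInt f a b.
Proof. exact (RInt_scal f a b k). Qed.

Lemma ex_RInt_continuous_R (f : R -> R) (a b : R) :
  (forall x, continuous f x) -> ex_RInt f a b.
Proof. intros Hc; apply (ex_RInt_continuous (V := R_CompleteNormedModule)); intros; apply Hc. Qed.

Definition smooth (u : R -> R) : Prop := forall n x, ex_derive (Derive_n u n) x.

Definition supported_in (M : R) (u : R -> R) : Prop :=
  forall n x, x <= 0 \/ M <= x -> Derive_n u n x = 0.

Lemma smooth_is_derive (u : R -> R) (n : nat) (x : R) :
  smooth u -> is_derive (Derive_n u n) x (Derive_n u (S n) x).
Proof. intros Hu; exact (Derive_correct _ _ (Hu n x)). Qed.

Lemma Derive_eta_is_derive (f : R -> R) (x l : R) :
  is_derive f x l -> Derive (fun y => f y) x = l.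
Proof. apply is_derive_unique. Qed.

Lemma Derive_n_locally_zero (u : R -> R) (x : R) :
  locally x (fun y => u y = 0) -> forall n, Derive_n u n x = 0.
Proof.
  intros Hx n. rewrite (Derive_n_ext_loc u (fun _ => 0) n x Hx).
  destruct n; [reflexivity | apply Derive_n_const].
Qed.

Lemma test_fn_supported (u : R -> R) :
  test_fn u -> smooth u /\ exists M, 0 < M /\ supported_in M u.
Proof.
  intros [Hu [r [M [Hr [HrM Hz]]]]]. split; [exact Hu |].
  exists (M + 1). split; [lra |]. intros n x Hx.
  apply Derive_n_locally_zero. destruct Hx as [Hx | Hx].
  - apply (filter_imp (fun y => y < r)); [intros; apply Hz; now left | apply (open_lt r x); lra].
  - apply (filter_imp (fun y => M < y)); [intros; apply Hz; now right | apply (open_gt M x); lra].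
Qed.

Lemma supported_in_le (M M' : R) (u : R -> R) :
  M <= M' -> supported_in M u -> supported_in M' u.
Proof. intros HM Hu n x Hx; apply Hu; lra. Qed.

Lemma weight_log_derive (a b : R) (g : nat) (x : R) :
  is_derive (weight a b g) x
    (weight a b g x * (2 * (2 * a + 2 * INR g * b) * x / (1 + x ^ 2))).
Proof.
  unfold weight, Rpower. auto_derive; [nra |].
  replace (x * (x * 1)) with (x ^ 2) by ring. field. nra.
Qed.

Lemma weight_pos (a b : R) (g : nat) (x : R) : 0 < weight a b g x.
Proof. apply exp_pos. Qed.

Ltac solve_ex_derive :=
  first [ now auto
        | eexists; now eauto using weight_log_derive, smooth_is_derive
        (* auto_derive unfolds [Derive_n u (S n)] into [Derive (Derive_n u n)] *)
        | match goal with
          | H : smooth ?u |- ex_derive (fun y => Derive (Derive_n ?u ?n) y) ?x => exact (H (S n) x)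
          end ].

Create HintDb coefficients.
#[local] Hint Unfold fcoef : coefficients.

Ltac continuity_by_derive :=
  intros; autounfold with coefficients;
  apply (ex_derive_continuous (K := R_AbsRing) (V := R_NormedModule)); auto_derive;
  repeat split; try solve_ex_derive; try nra.

Lemma quadratic_nonneg_discriminant (A B C : R) :
  0 <= C -> (forall s, 0 <= A - 2 * s * B + s ^ 2 * C) -> B ^ 2 <= A * C.
Proof.
  intros HC Hq. destruct (Rle_lt_or_eq_dec 0 C HC) as [HCpos | <-].
  - specialize (Hq (B / C)).
    replace (A - 2 * (B / C) * B + (B / C) ^ 2 * C) with ((A * C - B ^ 2) / C) in Hq
      by (field; lra).
    apply Rmult_le_compat_r with (r := C) in Hq; [| lra].
    unfold Rdiv in Hq. rewrite Rmult_assoc, Rinv_l in Hq; lra.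
  - destruct (Req_dec B 0) as [-> | HB]; [lra |].
    specialize (Hq ((A + 1) / (2 * B))).
    replace (A - 2 * ((A + 1) / (2 * B)) * B + ((A + 1) / (2 * B)) ^ 2 * 0) with (- 1) in Hq
      by (field; exact HB).
    lra.
Qed.

Section WeightedPairing.

Variables (m : nat) (M : R) (w : nat -> R -> R).

(* The H_1 pairing cut off at M, with the families X g, Y g standing for g-th derivatives. *)
Definition wip (X Y : nat -> R -> R) : R :=
  sum_f_R0 (fun g => RInt (fun x => w g x * X g x * Y g x) 0 M) m.

Lemma wip_ext (X X' Y Y' : nat -> R -> R) :
  (forall g x, X g x = X' g x) -> (forall g x, Y g x = Y' g x) -> wip X Y = wip X' Y'.
Proof.
  intros HX HY. apply sum_eq; intros g _. apply RInt_ext; intros x _. now rewrite HX, HY.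
Qed.

Hypothesis M_ge0 : 0 <= M.
Hypothesis w_ge0 : forall g x, 0 <= w g x.
Hypothesis w_continuous : forall g x, continuous (w g) x.

Variables (X Y : nat -> R -> R).
Hypothesis X_continuous : forall g x, continuous (X g) x.
Hypothesis Y_continuous : forall g x, continuous (Y g) x.

Lemma ex_RInt_weighted (g : nat) (f1 f2 : R -> R) :
  (forall x, continuous f1 x) -> (forall x, continuous f2 x) ->
  ex_RInt (fun x => w g x * f1 x * f2 x) 0 M.
Proof.
  intros H1 H2. apply ex_RInt_continuous_R; intros x.
  apply (continuous_mult (fun x => w g x * f1 x)); [apply (continuous_mult (w g)) |]; auto.
Qed.

Lemma wip_self_ge0 : 0 <= wip X X.
Proof.
  apply cond_pos_sum; intros g. apply RInt_ge_0; [exact M_ge0 | now apply ex_RInt_weighted |].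
  intros x _. rewrite Rmult_assoc. apply Rmult_le_pos; [apply w_ge0 | apply Rle_0_sqr].
Qed.

Lemma wip_quadratic_nonneg (s : R) :
  0 <= wip Y Y - 2 * s * wip X Y + s ^ 2 * wip X X.
Proof.
  unfold wip. rewrite scal_sum, (scal_sum _ _ (s ^ 2)), <- minus_sum, <- plus_sum.
  apply cond_pos_sum; intros g.
  pose proof (fun f1 f2 H1 H2 => RInt_correct _ _ _ (ex_RInt_weighted g f1 f2 H1 H2)) as HI.
  pose proof (is_RInt_plus _ _ _ _ _ _
    (is_RInt_minus _ _ _ _ _ _ (HI _ _ (Y_continuous g) (Y_continuous g))
       (is_RInt_scal _ _ _ (2 * s) _ (HI _ _ (X_continuous g) (Y_continuous g))))
    (is_RInt_scal _ _ _ (s ^ 2) _ (HI _ _ (X_continuous g) (X_continuous g)))) as Hsq.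
  pose proof (is_RInt_unique _ _ _ _ Hsq) as HE.
  change (plus (minus ?a (scal ?b ?c)) (scal ?d ?e)) with (a - b * c + d * e) in HE.
  rewrite (Rmult_comm _ (2 * s)), (Rmult_comm _ (s ^ 2)), <- HE.
  apply RInt_ge_0; [exact M_ge0 | eexists; exact Hsq |].
  intros x _. unfold minus, plus, opp, scal; simpl; unfold mult, plus; simpl.
  apply Rle_trans with (w g x * (Y g x - s * X g x) ^ 2); [| right; ring].
  apply Rmult_le_pos; [apply w_ge0 | apply pow2_ge_0].
Qed.

Lemma wip_Cauchy_Schwarz : wip X Y ^ 2 <= wip X X * wip Y Y.
Proof.
  rewrite Rmult_comm. apply quadratic_nonneg_discriminant;
    [apply wip_self_ge0 | apply wip_quadratic_nonneg].
Qed.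

End WeightedPairing.

Lemma ipH1_wip (m : nat) (a b M : R) (v w : R -> R) :
  0 <= M -> smooth v -> smooth w -> supported_in M v \/ supported_in M w ->
  ipH1 m a b v w = wip m M (weight a b) (Derive_n v) (Derive_n w).
Proof.
  intros HM Hv Hw Hsupp. apply sum_eq; intros g _.
  apply int0inf_RInt; [exact HM | continuity_by_derive |].
  intros x Hx. destruct Hsupp as [Hs | Hs]; rewrite Hs by lra; ring.
Qed.

Definition L_coef1 (alpha beta V g x : R) : R := beta * V + g * (V * (alpha / 2) + x).
Definition L_coef0 (g : R) : R := g * (g - 1) / 2.
#[local] Hint Unfold L_coef1 L_coef0 : coefficients.

Lemma L_level_step_derive (v0 v1 v2 v3 : R -> R) (alpha beta V g x : R) :
  is_derive v0 x (v1 x) -> is_derive v1 x (v2 x) -> is_derive v2 x (v3 x) ->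
  is_derive (fun y => fcoef alpha V y * v2 y + L_coef1 alpha beta V g y * v1 y + L_coef0 g * v0 y) x
    (fcoef alpha V x * v3 x + L_coef1 alpha beta V (g + 1) x * v2 x + L_coef0 (g + 1) * v1 x).
Proof.
  intros H0 H1 H2. unfold fcoef, L_coef1, L_coef0.
  auto_derive; [repeat split; eexists; eauto |].
  rewrite (Derive_eta_is_derive _ _ _ H0), (Derive_eta_is_derive _ _ _ H1),
    (Derive_eta_is_derive _ _ _ H2).
  field.
Qed.

Lemma sigma_level_step_derive (v0 v1 v2 : R -> R) (g x : R) :
  is_derive v0 x (v1 x) -> is_derive v1 x (v2 x) ->
  is_derive (fun y => - (y * v1 y + g * v0 y)) x (- (x * v2 x + (g + 1) * v1 x)).
Proof.
  intros H0 H1. auto_derive; [repeat split; eexists; eauto |].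
  rewrite (Derive_eta_is_derive _ _ _ H0), (Derive_eta_is_derive _ _ _ H1). ring.
Qed.

Definition Lop_level (alpha beta V : R) (u : R -> R) (g : nat) (x : R) : R :=
  fcoef alpha V x * Derive_n u (S (S g)) x + L_coef1 alpha beta V (INR g) x * Derive_n u (S g) x
  + L_coef0 (INR g) * Derive_n u g x.

Definition sigma_level (phi : R -> R) (g : nat) (x : R) : R :=
  - (x * Derive_n phi (S g) x + INR g * Derive_n phi g x).

Section Derivatives.

Variable u : R -> R.
Hypothesis u_smooth : smooth u.

Lemma Lop_level_derive (alpha beta V : R) (g : nat) (x : R) :
  is_derive (Lop_level alpha beta V u g) x (Lop_level alpha beta V u (S g) x).
Proof.
  unfold Lop_level. rewrite S_INR.
  apply L_level_step_derive; apply smooth_is_derive, u_smooth.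
Qed.

Lemma sigma_level_derive (g : nat) (x : R) :
  is_derive (sigma_level u g) x (sigma_level u (S g) x).
Proof.
  unfold sigma_level. rewrite S_INR.
  apply sigma_level_step_derive; apply smooth_is_derive, u_smooth.
Qed.

Lemma Derive_n_Lop (alpha beta V : R) (g : nat) (x : R) :
  Derive_n (Lop alpha beta V u) g x = Lop_level alpha beta V u g x.
Proof.
  revert x; induction g as [| g IH]; intros x.
  - change (Lop alpha beta V u x = Lop_level alpha beta V u 0 x).
    unfold Lop, Lop_level, L_coef1, L_coef0, gcoef.
    change (Derive_n u 2 x) with (Derive (Derive u) x).
    change (Derive_n u 1 x) with (Derive u x). change (INR 0) with 0.
    replace (Derive (fun y => fcoef alpha V y * Derive u y) x)
      with ((V * (alpha / 2) + x) * Derive u x + fcoef alpha V x * Derive (Derive u) x).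
    + field.
    + symmetry; apply is_derive_unique. unfold fcoef.
      auto_derive; [apply (u_smooth 1%nat) |].
      change (Derive (fun y => Derive u y) x) with (Derive (Derive u) x). field.
  - change (Derive (Derive_n (Lop alpha beta V u) g) x = Lop_level alpha beta V u (S g) x).
    rewrite (Derive_ext _ _ x IH). apply is_derive_unique, Lop_level_derive.
Qed.

Lemma smooth_Lop (alpha beta V : R) : smooth (Lop alpha beta V u).
Proof.
  intros n x. apply (ex_derive_ext (Lop_level alpha beta V u n));
    [intros; symmetry; apply Derive_n_Lop |].
  eexists; apply Lop_level_derive.
Qed.

Lemma Derive_n_sigma_op (g : nat) (x : R) : Derive_n (sigma_op u) g x = sigma_level u g x.
Proof.
  revert x; induction g as [| g IH]; intros x.
  - change (sigma_op u x = sigma_level u 0 x).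
    unfold sigma_op, sigma_level.
    change (Derive_n u 1 x) with (Derive u x). change (INR 0) with 0.
    replace (Derive (fun y => y * u y) x) with (u x + x * Derive u x).
    + ring.
    + symmetry; apply is_derive_unique. auto_derive; [apply (u_smooth 0%nat) |].
      change (Derive (fun y => u y) x) with (Derive u x). ring.
  - change (Derive (Derive_n (sigma_op u) g) x = sigma_level u (S g) x).
    rewrite (Derive_ext _ _ x IH). apply is_derive_unique, sigma_level_derive.
Qed.

Lemma smooth_sigma_op : smooth (sigma_op u).
Proof.
  intros n x. apply (ex_derive_ext (sigma_level u n));
    [intros; symmetry; apply Derive_n_sigma_op |].
  eexists; apply sigma_level_derive.
Qed.

End Derivatives.

(* (x w)' / w = 1 + 2 p x^2 / (1 + x^2) for w = (1 + x^2)^p; the - g comes from D^g (sigma phi). *)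
Definition sigma_adj_coef (p g x : R) : R := 1 - g + 2 * p * x ^ 2 / (1 + x ^ 2).

(* Q = L_coef1 + x c - f' - 2 p x f / (1 + x^2) cancels the v0 v1 terms in energy_derive. *)
Definition energy_coef (p g alpha beta V x : R) : R :=
  beta * V + (g - 1) * (V * alpha / 2) + p * x ^ 2 * (x - V * alpha) / (1 + x ^ 2).

(* R = L_coef0 g + c^2/2 - p x Q / (1 + x^2) - Q'/2 with c = sigma_adj_coef and Q = energy_coef,
   expanded in the bounded quotients x^k / (1 + x^2)^j. *)
Definition energy_rem (p g alpha beta V x : R) : R :=
  L_coef0 g + (1 - g) ^ 2 / 2 + 2 * p * (1 - g) * (x ^ 2 / (1 + x ^ 2))
  + p ^ 2 * (x ^ 4 / (1 + x ^ 2) ^ 2) - p / 2 * ((x ^ 4 + 3 * x ^ 2) / (1 + x ^ 2) ^ 2)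
  + V * (p * alpha * (p * (x ^ 3 / (1 + x ^ 2) ^ 2) + x / (1 + x ^ 2) ^ 2)
         - p * (beta + (g - 1) * alpha / 2) * (x / (1 + x ^ 2))).

#[local] Hint Unfold sigma_adj_coef energy_coef energy_rem : coefficients.

Section WeightedLevel.

Variables (w : R -> R) (p : R).
Hypothesis w_log_derive : forall x, is_derive w x (w x * (2 * p * x / (1 + x ^ 2))).

Lemma energy_derive (v0 v1 v2 : R -> R) (g alpha beta V x : R) :
  is_derive v0 x (v1 x) -> is_derive v1 x (v2 x) ->
  is_derive (fun y => w y * (fcoef alpha V y * v0 y * v1 y
                             + / 2 * energy_coef p g alpha beta V y * v0 y ^ 2)) x
    (w x * (fcoef alpha V x * v2 x + L_coef1 alpha beta V g x * v1 x + L_coef0 g * v0 x) * v0 x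
     + / 2 * w x * (x * v1 x + sigma_adj_coef p g x * v0 x) ^ 2
     + w x * (V * alpha / 2 * x) * v1 x ^ 2
     - w x * energy_rem p g alpha beta V x * v0 x ^ 2).
Proof.
  intros H0 H1. unfold energy_rem, energy_coef, sigma_adj_coef, L_coef1, L_coef0, fcoef.
  auto_derive; [repeat split; try (eexists; eauto); nra |].
  rewrite (Derive_eta_is_derive _ _ _ (w_log_derive x)), (Derive_eta_is_derive _ _ _ H0),
    (Derive_eta_is_derive _ _ _ H1).
  field. nra.
Qed.

Lemma RInt_sigma_by_parts (v0 v1 ps0 ps1 : R -> R) (g M : R) :
  (forall x, is_derive v0 x (v1 x)) -> (forall x, ex_derive v1 x) ->
  (forall x, is_derive ps0 x (ps1 x)) -> (forall x, ex_derive ps1 x) ->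
  v0 0 = 0 -> v0 M = 0 ->
  RInt (fun x => w x * v0 x * - (x * ps1 x + g * ps0 x)) 0 M =
  RInt (fun x => w x * ps0 x * (x * v1 x + sigma_adj_coef p g x * v0 x)) 0 M.
Proof.
  intros Hv0 Hv1 Hps0 Hps1 Hz0 HzM.
  assert (HI : is_RInt (fun x => w x * ps0 x * (x * v1 x + sigma_adj_coef p g x * v0 x)
                                 - w x * v0 x * - (x * ps1 x + g * ps0 x)) 0 M
                 (minus (w M * M * v0 M * ps0 M) (w 0 * 0 * v0 0 * ps0 0))).
  { apply (is_RInt_derive (fun y => w y * y * v0 y * ps0 y)).
    - intros x _. unfold sigma_adj_coef. auto_derive; [repeat split; eexists; eauto |].
      rewrite (Derive_eta_is_derive _ _ _ (w_log_derive x)), (Derive_eta_is_derive _ _ _ (Hv0 x)),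
        (Derive_eta_is_derive _ _ _ (Hps0 x)).
      field. nra.
    - continuity_by_derive. }
  rewrite Hz0, HzM in HI.
  pose proof (is_RInt_unique _ _ _ _ HI) as HE.
  rewrite RInt_Rminus in HE;
    [| apply ex_RInt_continuous_R; continuity_by_derive ..].
  unfold minus, plus, opp in HE; simpl in HE. lra.
Qed.

Lemma RInt_energy_derive_eq0 (v0 v1 v2 : R -> R) (g alpha beta V M : R) :
  (forall x, is_derive v0 x (v1 x)) -> (forall x, is_derive v1 x (v2 x)) ->
  (forall x, ex_derive v2 x) -> v0 0 = 0 -> v0 M = 0 ->
  RInt (fun x =>
    w x * (fcoef alpha V x * v2 x + L_coef1 alpha beta V g x * v1 x + L_coef0 g * v0 x) * v0 x
    + / 2 * w x * (x * v1 x + sigma_adj_coef p g x * v0 x) ^ 2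
    + w x * (V * alpha / 2 * x) * v1 x ^ 2
    - w x * energy_rem p g alpha beta V x * v0 x ^ 2) 0 M = 0.
Proof.
  intros Hv0 Hv1 Hv2 Hz0 HzM.
  set (E := fun y => w y * (fcoef alpha V y * v0 y * v1 y
                            + / 2 * energy_coef p g alpha beta V y * v0 y ^ 2)).
  erewrite is_RInt_unique; [| apply (is_RInt_derive E); [intros; apply energy_derive; auto |]].
  - unfold E. rewrite Hz0, HzM. unfold minus, plus, opp; simpl. ring.
  - continuity_by_derive.
Qed.

Hypothesis w_pos : forall x, 0 < w x.

Lemma RInt_energy_le (v0 v1 v2 : R -> R) (g alpha beta V M K : R) :
  (forall x, is_derive v0 x (v1 x)) -> (forall x, is_derive v1 x (v2 x)) ->
  (forall x, ex_derive v2 x) ->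
  0 <= M -> v0 0 = 0 -> v0 M = 0 -> 0 <= alpha -> 0 <= V ->
  (forall x, 0 <= x -> energy_rem p g alpha beta V x <= K) ->
  RInt (fun x => w x * (fcoef alpha V x * v2 x + L_coef1 alpha beta V g x * v1 x
                        + L_coef0 g * v0 x) * v0 x) 0 M
  + / 2 * RInt (fun x => w x * (x * v1 x + sigma_adj_coef p g x * v0 x)
                         * (x * v1 x + sigma_adj_coef p g x * v0 x)) 0 M
  <= K * RInt (fun x => w x * v0 x * v0 x) 0 M.
Proof.
  intros Hv0 Hv1 Hv2 HM Hz0 HzM Halpha HV Hrem.
  pose proof (RInt_energy_derive_eq0 v0 v1 v2 g alpha beta V M Hv0 Hv1 Hv2 Hz0 HzM) as HdE.
  set (dE := fun x => _) in HdE.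
  rewrite <- RInt_Rscal, <- RInt_Rplus; [| apply ex_RInt_continuous_R; continuity_by_derive ..].
  apply Rle_trans with (RInt (fun x => dE x + K * (w x * v0 x * v0 x)) 0 M).
  - apply RInt_le; [exact HM | apply ex_RInt_continuous_R .. |];
      [continuity_by_derive | unfold dE; continuity_by_derive |].
    intros x Hx. unfold dE.
    assert (0 <= w x * (V * alpha / 2 * x) * v1 x ^ 2).
    { apply Rmult_le_pos; [| apply pow2_ge_0].
      apply Rmult_le_pos; [apply Rlt_le, w_pos |].
      assert (0 <= V * alpha) by (apply Rmult_le_pos; lra).
      apply Rmult_le_pos; lra. }
    assert (w x * energy_rem p g alpha beta V x * v0 x ^ 2 <= w x * K * v0 x ^ 2).
    { apply Rmult_le_compat_r; [apply pow2_ge_0 |].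
      apply Rmult_le_compat_l; [apply Rlt_le, w_pos | apply Hrem; lra]. }
    nra.
  - rewrite RInt_Rplus, RInt_Rscal, HdE;
      [lra | apply ex_RInt_continuous_R; unfold dE; continuity_by_derive ..].
Qed.

End WeightedLevel.

Lemma div_unit_interval (n d : R) : 0 <= n <= d -> 0 < d -> 0 <= n / d <= 1.
Proof.
  intros Hn Hd. split; [apply Rdiv_le_0_compat; lra |]. apply (Rdiv_le_1 n d Hd); lra.
Qed.

Definition energy_const (mm P alpha : R) : R :=
  mm ^ 2 / 2 + (1 + mm) ^ 2 / 2 + 2 * P + P ^ 2 + 2 * alpha * P + alpha * P ^ 2.

Lemma quotient_bounds (x : R) : 0 <= x ->
  0 <= x ^ 2 / (1 + x ^ 2) <= 1 /\ 0 <= x ^ 4 / (1 + x ^ 2) ^ 2 <= 1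
  /\ 0 <= (x ^ 4 + 3 * x ^ 2) / (1 + x ^ 2) ^ 2 /\ 0 <= x ^ 3 / (1 + x ^ 2) ^ 2 <= 1
  /\ 0 <= x / (1 + x ^ 2) ^ 2 <= 1 /\ 0 <= x / (1 + x ^ 2) <= 1.
Proof.
  intros Hx.
  assert (Hs : 1 <= 1 + x ^ 2) by nra.
  assert (Hs2 : 1 + x ^ 2 <= (1 + x ^ 2) ^ 2) by nra.
  assert (0 <= x ^ 2 * (x - 1 / 2) ^ 2) by (apply Rmult_le_pos; apply pow2_ge_0).
  repeat split; try (apply div_unit_interval; nra); apply Rdiv_le_0_compat; nra.
Qed.

Lemma energy_rem_le (p P g mm alpha beta V x : R) :
  0 <= p <= P -> 0 <= g <= mm -> 0 <= alpha -> 0 <= beta -> 0 <= V -> 0 <= x ->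
  energy_rem p g alpha beta V x <= energy_const mm P alpha * (1 + V).
Proof.
  intros Hp Hg Halpha Hbeta HV Hx. unfold energy_rem, energy_const, L_coef0.
  destruct (quotient_bounds x Hx) as (Q1 & Q2 & Q3 & Q4 & Q5 & Q6).
  set (q1 := x ^ 2 / (1 + x ^ 2)) in *. set (q2 := x ^ 4 / (1 + x ^ 2) ^ 2) in *.
  set (q3 := (x ^ 4 + 3 * x ^ 2) / (1 + x ^ 2) ^ 2) in *. set (q4 := x ^ 3 / (1 + x ^ 2) ^ 2) in *.
  set (q5 := x / (1 + x ^ 2) ^ 2) in *. set (q6 := x / (1 + x ^ 2)) in *.
  clearbody q1 q2 q3 q4 q5 q6.
  assert (B0 : g * (g - 1) / 2 + (1 - g) ^ 2 / 2 + 2 * p * (1 - g) * q1 + p ^ 2 * q2 - p / 2 * q3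
               <= mm ^ 2 / 2 + (1 + mm) ^ 2 / 2 + 2 * P + P ^ 2).
  { assert (0 <= p * g * q1) by (apply Rmult_le_pos; nra).
    assert (p ^ 2 * q2 <= P ^ 2) by nra.
    assert (0 <= p * q3) by nra.
    nra. }
  assert (B1 : p * alpha * (p * q4 + q5) - p * (beta + (g - 1) * alpha / 2) * q6
               <= 2 * alpha * P + alpha * P ^ 2).
  { assert (0 <= p * q6 * (beta + g * alpha / 2)) by (apply Rmult_le_pos; nra).
    assert (p ^ 2 * q4 <= P ^ 2) by nra.
    assert (p * alpha * (p * q4) <= alpha * P ^ 2).
    { replace (p * alpha * (p * q4)) with (alpha * (p ^ 2 * q4)) by ring.
      apply Rmult_le_compat_l; lra. }
    assert (p * alpha * q5 <= alpha * P).
    { replace (p * alpha * q5) with (alpha * (p * q5)) by ring.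
      apply Rmult_le_compat_l; nra. }
    assert (p * alpha * q6 <= alpha * P).
    { replace (p * alpha * q6) with (alpha * (p * q6)) by ring.
      apply Rmult_le_compat_l; nra. }
    nra. }
  assert (0 <= 2 * alpha * P + alpha * P ^ 2) by nra.
  assert (0 <= mm ^ 2 / 2 + (1 + mm) ^ 2 / 2 + 2 * P + P ^ 2) by nra.
  nra.
Qed.

Definition sigma_adj_level (a b : R) (u : R -> R) (g : nat) (x : R) : R :=
  x * Derive_n u (S g) x + sigma_adj_coef (2 * a + 2 * INR g * b) (INR g) x * Derive_n u g x.

#[local] Hint Unfold sigma_adj_level : coefficients.

Section Assembly.

Variables (m : nat) (a b M : R) (u : R -> R).
Hypothesis M_ge0 : 0 <= M.
Hypothesis u_smooth : smooth u.
Hypothesis u_supported : supported_in M u.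

Lemma ipH1_Lop (alpha beta V : R) :
  ipH1 m a b (Lop alpha beta V u) u = wip m M (weight a b) (Lop_level alpha beta V u) (Derive_n u).
Proof.
  rewrite (ipH1_wip m a b M); auto using smooth_Lop.
  apply wip_ext; [intros; apply Derive_n_Lop, u_smooth | reflexivity].
Qed.

Lemma ipH1_sigma_op (phi : R -> R) : smooth phi ->
  ipH1 m a b u (sigma_op phi) = wip m M (weight a b) (Derive_n phi) (sigma_adj_level a b u).
Proof.
  intros Hphi. rewrite (ipH1_wip m a b M); auto using smooth_sigma_op.
  rewrite (wip_ext _ _ _ _ (Derive_n u) _ (sigma_level phi));
    [| reflexivity | intros; apply Derive_n_sigma_op, Hphi].
  apply sum_eq; intros g _. unfold sigma_level, sigma_adj_level.
  apply (RInt_sigma_by_parts _ _ (weight_log_derive a b g));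
    try (intros; apply smooth_is_derive); auto; try apply u_supported; lra.
Qed.

Lemma wip_energy_le (alpha beta V : R) :
  0 <= a -> 0 <= b -> 0 <= alpha -> 0 <= beta -> 0 <= V ->
  wip m M (weight a b) (Lop_level alpha beta V u) (Derive_n u)
  + / 2 * wip m M (weight a b) (sigma_adj_level a b u) (sigma_adj_level a b u)
  <= energy_const (INR m) (2 * a + 2 * INR m * b) alpha * (1 + V)
     * wip m M (weight a b) (Derive_n u) (Derive_n u).
Proof.
  intros Ha Hb Halpha Hbeta HV. unfold wip.
  rewrite scal_sum, (scal_sum _ _ (_ * (1 + V))), <- plus_sum.
  apply sum_Rle; intros g Hg.
  assert (Hgm : 0 <= INR g <= INR m) by (split; [apply pos_INR | apply le_INR, Hg]).
  unfold Lop_level, sigma_adj_level. rewrite !(Rmult_comm (RInt _ 0 M)).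
  apply (RInt_energy_le _ _ (weight_log_derive a b g) (weight_pos a b g));
    try (intros; apply smooth_is_derive, u_smooth); try apply u_supported; try lra.
  - intros; apply u_smooth.
  - intros x Hx. apply energy_rem_le; nra.
Qed.

End Assembly.

Lemma sqrt_eq_1 (x : R) : sqrt x = 1 -> x = 1.
Proof.
  intros H. destruct (Rle_lt_dec x 0) as [Hx | Hx]; [rewrite sqrt_neg_0 in H; lra |].
  rewrite <- (sqrt_sqrt x), H by lra. ring.
Qed.

Theorem lemma6p2 (alpha beta : R) (m : nat) (a b : R) :
  0 <= alpha -> 0 <= beta -> 0 <= a -> 1 / 2 <= b ->
  exists C : R,
    forall (mlam t W : R), 0 < mlam -> 0 <= t ->
    forall u : R -> R, test_fn u ->
    forall phi : R -> R, test_fn phi -> normH1 m a b phi = 1 ->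
      ipH1 m a b (Lop alpha beta (Vcoef beta mlam t W) u) u
      + 1 / 2 * (Rabs (ipH1 m a b u (sigma_op phi))) ^ 2
      <= C * (1 + Vcoef beta mlam t W) * ipH1 m a b u u.
Proof.
  intros Halpha Hbeta Ha Hb.
  exists (energy_const (INR m) (2 * a + 2 * INR m * b) alpha).
  intros mlam t W Hmlam _ u Hu phi Hphi Hphi_unit.
  assert (HV : 0 <= Vcoef beta mlam t W)
    by (apply Rlt_le, Rmult_lt_0_compat; [exact Hmlam | apply exp_pos]).
  destruct (test_fn_supported u Hu) as [Su [Mu [HMu Hsu]]].
  destruct (test_fn_supported phi Hphi) as [Sphi [Mphi [HMphi Hsphi]]].
  set (M := Rmax Mu Mphi).
  assert (HM : 0 <= M) by (unfold M; pose proof (Rmax_l Mu Mphi); lra).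
  assert (HsuM : supported_in M u) by (apply (supported_in_le Mu); [apply Rmax_l | exact Hsu]).
  assert (HsphiM : supported_in M phi)
    by (apply (supported_in_le Mphi); [apply Rmax_r | exact Hsphi]).
  assert (Hphi1 : wip m M (weight a b) (Derive_n phi) (Derive_n phi) = 1).
  { rewrite <- (ipH1_wip m a b M); auto. now apply sqrt_eq_1. }
  rewrite (ipH1_Lop m a b M), (ipH1_sigma_op m a b M), (ipH1_wip m a b M u u), pow2_abs; auto.
  assert (HCS := wip_Cauchy_Schwarz m M (weight a b) HM
    (fun g x => Rlt_le _ _ (weight_pos a b g x)) ltac:(continuity_by_derive)
    (Derive_n phi) (sigma_adj_level a b u) ltac:(continuity_by_derive) ltac:(continuity_by_derive)).
  assert (HE := wip_energy_le m a b M u HM Su HsuM alpha beta _ Ha ltac:(lra) Halpha Hbeta HV).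
  rewrite Hphi1 in HCS. lra.
Qed.
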